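(* Let $G$ be a finite semi-3-abelian 3-group, let $x\in\Omega_{1}(G)$, let $k\ge 1$ and $g_1,\dots,g_k\in G$. Then for every permutation $\sigma$ of $\{1,\dots,k\}$, $$[x,g_{\sigma(1)},g_{\sigma(2)},\dots,g_{\sigma(k)}]=[x,g_{1},g_{2},\dots,g_{k}]^{2^{\delta(\sigma)}},$$ where $\delta(\sigma)=0$ if $\sigma$ is an even permutation and $\delta(\sigma)=1$ if $\sigma$ is odd.
   Context: A finite 3-group $G$ is semi-3-abelian if for all $a,b\in G$: $(ab)^{3}=1$ if and only if $a^{3}b^{3}=1$. $\Omega_{1}(G)=\langle g\in G : g^{3}=1\rangle$. Commutators: $[x,y]=x^{-1}y^{-1}xy$, and left-normed $[x_1,\dots,x_n]=[[x_1,\dots,x_{n-1}],x_n]$. *)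

From mathcomp Require Import all_boot all_fingroup all_solvable.
Set Implicit Arguments. Unset Strict Implicit. Unset Printing Implicit Defensive.
Local Open Scope group_scope.

Definition semi3abelian (gT : finGroupType) (G : {set gT}) : Prop :=
  forall a b, a \in G -> b \in G -> ((a * b) ^+ 3 == 1) = (a ^+ 3 * b ^+ 3 == 1).

Definition lcomm (gT : finGroupType) (x : gT) (s : seq gT) : gT :=
  foldl (fun a b => [~ a, b]) x s.

(* In a semi-3-abelian 3-group, Omega_1(G) has exponent 3 and (a w)^3 = a^3 for
   every w in Omega_1(G).  Expanding (c w)^3 = c^3 w^(c^2) w^c w then gives
   w^(c^2) w^c w = 1, so the conjugates of w commute, its normal closure is
   abelian, and [w, c, c] = 1.  Commutation with c being additive on that
   abelian closure, expanding [w, ab, ab] = 1 yields [w, a, b] = [w, b, a]^-1: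
   swapping two adjacent entries of a left-normed commutator starting in
   Omega_1(G) inverts it.  Hence every transposition of the entries inverts
   the commutator, and z^-1 = z^2 since z^3 = 1. *)

From mathcomp Require Import all_boot all_fingroup all_solvable.
Set Implicit Arguments. Unset Strict Implicit. Unset Printing Implicit Defensive.
Local Open Scope group_scope.

Lemma map_tperm_id (T : finType) (i j : T) s :
  i \notin s -> j \notin s -> map (tperm i j) s = s.
Proof.
move=> iNs jNs; apply: map_id_in => y ys.
by apply: tpermD; [apply: contraNneq iNs => -> | apply: contraNneq jNs => ->].
Qed.

Section AlternatingSeqFun.
Variables (T : finType) (rT : finGroupType) (F : seq T -> rT).
Hypothesis F_swap_adj :
  forall u a b v, F (u ++ a :: b :: v) = (F (u ++ b :: a :: v))^-1.

Lemma alt_swap u a m b v :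
  F (u ++ a :: m ++ b :: v) = (F (u ++ b :: m ++ a :: v))^-1.
Proof.
elim: m u => [|c m IHm] u /=; first exact: F_swap_adj.
rewrite F_swap_adj -(cat_rcons c u (a :: _)) IHm cat_rcons invgK.
by rewrite F_swap_adj.
Qed.

Lemma alt_map_tperm_split u m v (i j : T) :
  uniq (u ++ i :: m ++ j :: v) ->
  F (map (tperm i j) (u ++ i :: m ++ j :: v)) = (F (u ++ i :: m ++ j :: v))^-1.
Proof.
rewrite -cat1s uniq_catCA cat1s /= => /andP[iN].
rewrite catA -cat1s uniq_catCA cat1s /= => /andP[jN _].
move: iN jN; rewrite !mem_cat !inE !negb_or => /and4P[iu im _ iv] /andP[/andP[ju jm] jv].
by rewrite !map_cat /= map_cat /= tpermL tpermR !map_tperm_id // alt_swap.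
Qed.

Lemma alt_map_tperm (i j : T) s : uniq s -> i \in s -> j \in s -> i != j ->
  F (map (tperm i j) s) = (F s)^-1.
Proof.
move=> Us iS; move: Us; case/splitPr: iS => u r; rewrite mem_cat inE => Us jS.
move: Us; case/or3P: jS => [/splitPr[u1 u2] | /eqP-> | /splitPr[m v]].
- by rewrite -catA /= tpermC => Us _; exact: alt_map_tperm_split.
- by rewrite eqxx.
- by move=> Us _; exact: alt_map_tperm_split.
Qed.

Lemma alt_map_perm (p : {perm T}) s : uniq s -> (forall x, x \in s) ->
  F (map p s) = if odd_perm p then (F s)^-1 else F s.
Proof.
case: (prod_tpermP p) => ts -> {p}; elim: ts s => [|t ts IHts] s /=.
  by rewrite big_nil odd_perm1 => _ _ _; congr F; apply: map_id_in => x _; rewrite perm1.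
move=> /andP[t12 dts] Us fulls; rewrite big_cons odd_permM odd_tperm t12.
set q := \prod_(_ <- ts) _.
have -> : map (tperm t.1 t.2 * q) s = map q (map (tperm t.1 t.2) s).
  by rewrite -map_comp; apply: eq_map => x; rewrite permM.
rewrite IHts ?alt_map_tperm //.
- by case: odd_perm; rewrite ?invgK.
- by rewrite (map_inj_uniq (@perm_inj _ _)).
- by move=> x; rewrite -[x](tpermK t.1 t.2) map_f.
Qed.

End AlternatingSeqFun.

Lemma expg3_mul (gT : finGroupType) (c w : gT) :
  (c * w) ^+ 3 = c ^+ 3 * (w ^ (c ^+ 2) * w ^ c * w).
Proof. by rewrite !conjgE !expgS expg0 !mulg1 !invMg !mulgA !mulgK. Qed.

Lemma memR_norm (gT : finGroupType) (A : {group gT}) t c :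
  c \in 'N(A) -> t \in A -> [~ t, c] \in A.
Proof. by move=> nAc tA; rewrite commgEl groupM ?groupV ?memJ_norm. Qed.

Lemma class_gen_norm (gT : finGroupType) (G : {group gT}) w :
  G \subset 'N(<<w ^: G>>).
Proof. exact: subset_trans (class_norm w G) (norm_gen _). Qed.

Lemma commMl_abelian (gT : finGroupType) (A : {group gT}) t1 t2 c :
  abelian A -> c \in 'N(A) -> t1 \in A -> t2 \in A ->
  [~ t1 * t2, c] = [~ t1, c] * [~ t2, c].
Proof.
move=> abA nAc t1A t2A; rewrite commMgJ conjgE.
by rewrite (centsP abA _ (memR_norm nAc t1A) _ t2A) mulKg.
Qed.

Section Semi3Abelian.
Variables (gT : finGroupType) (G : {group gT}).
Hypotheses (pG : 3.-group G) (sG : semi3abelian G).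

Lemma Ohm1_expg3 w : w \in 'Ohm_1(G) -> w ^+ 3 = 1.
Proof.
rewrite (OhmE 1 pG) expn1.
have Ldiv3_group : group_set 'Ldiv_3(G).
  apply/group_setP; split; first by apply/LdivP; rewrite group1 expg1n.
  move=> a b /LdivP[aG a3] /LdivP[bG b3]; apply/LdivP; split; first exact: groupM.
  by apply/eqP; rewrite sG // a3 b3 mulg1.
by rewrite (gen_set_id Ldiv3_group) => /LdivP[].
Qed.

Lemma Ohm1R w c : w \in 'Ohm_1(G) -> c \in G -> [~ w, c] \in 'Ohm_1(G).
Proof. by move=> wO cG; rewrite memR_norm // (subsetP (gFnorm _ G)). Qed.

Lemma expg3_mul_Ohm1 a w : a \in G -> w \in 'Ohm_1(G) -> (a * w) ^+ 3 = a ^+ 3.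
Proof.
move=> aG wO; have := sG (groupM aG (subsetP (Ohm_sub 1 G) w wO)) (groupVr aG).
have -> : a * w * a^-1 = w ^ a^-1 by rewrite conjgE invgK mulgA.
rewrite -conjXg (Ohm1_expg3 wO) conj1g eqxx expgVn.
by move=> /esym/eqP/mulg1_eq/invg_inj.
Qed.

Lemma Ohm1_conj_trace w c :
  w \in 'Ohm_1(G) -> c \in G -> w ^ (c ^+ 2) * w ^ c * w = 1.
Proof.
move=> wO cG; apply: (@mulgI _ (c ^+ 3)).
by rewrite -expg3_mul expg3_mul_Ohm1 // mulg1.
Qed.

Lemma Ohm1_commute_conj w c : w \in 'Ohm_1(G) -> c \in G -> commute w (w ^ c).
Proof.
move=> wO cG.
have trace_c : w ^ (c ^+ 2) * (w ^ c * w) = 1.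
  by rewrite mulgA; exact: Ohm1_conj_trace.
(* Conjugating the identity for c^-1 by c^2 gives (w w^c) w^(c^2) = 1. *)
have := Ohm1_conj_trace wO (groupVr cG).
move/(congr1 (conjg^~ (c ^+ 2))) => /=; rewrite conj1g 2!conjMg -!conjgM.
rewrite expgVn mulVg conjg1 {2}expgS expg1 mulKg => trace_cV.
by apply: invg_inj; rewrite (mulg1_eq trace_cV) -(mulg1_eq trace_c) invgK expgS expg1.
Qed.

Lemma Ohm1_class_abelian w : w \in 'Ohm_1(G) -> abelian <<w ^: G>>.
Proof.
move=> wO; rewrite abelian_gen; apply/centsP => _ /imsetP[c cG ->] _ /imsetP[d dG ->].
have -> : w ^ d = (w ^ (d * c^-1)) ^ c by rewrite -conjgM mulgKV.
by rewrite /commute -!conjMg Ohm1_commute_conj ?groupM ?groupV.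
Qed.

Lemma Ohm1_commMl w t1 t2 c : w \in 'Ohm_1(G) ->
  t1 \in <<w ^: G>> -> t2 \in <<w ^: G>> -> c \in G ->
  [~ t1 * t2, c] = [~ t1, c] * [~ t2, c].
Proof.
move=> wO t1W t2W cG; apply: (commMl_abelian (A := <<w ^: G>>%G)) => //.
  exact: Ohm1_class_abelian.
exact: subsetP (class_gen_norm G w) c cG.
Qed.

Lemma Ohm1_commgg t c : t \in 'Ohm_1(G) -> c \in G -> [~ t, c, c] = 1.
Proof.
move=> tO cG.
have trace_c := Ohm1_conj_trace tO cG; rewrite -mulgA in trace_c.
have tc2 : t ^ (c ^+ 2) = t^-1 * (t ^ c)^-1.
  by rewrite -invMg -(mulg1_eq trace_c) invgK.
have ct := commuteV (Ohm1_commute_conj tO cG).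
have tc3 : (t ^ c) ^+ 3 = 1 by rewrite -conjXg Ohm1_expg3 // conj1g.
rewrite !commgEl invMg invgK conjMg conjVg -conjgM -(expg1 c) -expgD expg1 tc2.
by rewrite !mulgA -(mulgA _ t) ct !mulgA mulgK -expg2 -expgSr expgVn tc3 invg1.
Qed.

Lemma Ohm1_comm_aba t a b : t \in 'Ohm_1(G) -> a \in G -> b \in G ->
  [~ t, a, b, a] = 1.
Proof.
move=> tO aG bG; have taO := Ohm1R tO aG.
have := Ohm1_commgg taO (groupM aG bG).
rewrite (commgMR [~ t, a] a b) (Ohm1_commgg tO aG) mulg1 comm1g mulg1.
rewrite commgMR (Ohm1_commgg taO bG) mul1g -conjg_mulR => /eqP.
by rewrite conjg_eq1 => /eqP.
Qed.

Lemma Ohm1_comm_swap t a b : t \in 'Ohm_1(G) -> a \in G -> b \in G ->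
  [~ t, a, b] = [~ t, b, a]^-1.
Proof.
move=> tO aG bG.
have nWG := subsetP (class_gen_norm G t).
have tW : t \in <<t ^: G>> by rewrite mem_gen ?class_refl.
have taW := memR_norm (nWG a aG) tW; have tbW := memR_norm (nWG b bG) tW.
have tabW := memR_norm (nWG b bG) taW.
have taO := Ohm1R tO aG.
have lin := Ohm1_commMl tO.
(* In the expansion of [t, ab, ab] = 1 only [t, a, b] [t, b, a] survives. *)
have := Ohm1_commgg tO (groupM aG bG).
rewrite (commgMR t a b) commgMR (lin _ _ b (groupM tbW taW) tabW bG) (lin _ _ b tbW taW bG).
rewrite (lin _ _ a (groupM tbW taW) tabW aG) (lin _ _ a tbW taW aG).
rewrite (Ohm1_commgg tO aG) (Ohm1_comm_aba tO aG bG) !mulg1 (Ohm1_comm_aba tO bG aG).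
rewrite (Ohm1_commgg tO bG) (Ohm1_commgg taO bG) mul1g !mulg1.
by move/mulg1_eq <-; rewrite invgK.
Qed.

Lemma Ohm1_commVl w c : w \in 'Ohm_1(G) -> c \in G -> [~ w^-1, c] = [~ w, c]^-1.
Proof.
move=> wO cG; have wW : w \in <<w ^: G>> := mem_gen (class_refl G w).
have := Ohm1_commMl wO (groupVr wW) wW cG.
by rewrite mulVg comm1g => /esym/mulg1_eq <-; rewrite invgK.
Qed.

Lemma lcomm_Ohm1 w s : w \in 'Ohm_1(G) -> {subset s <= G} -> lcomm w s \in 'Ohm_1(G).
Proof.
elim: s w => [|c s IHs] w wO sG_s //=.
apply: IHs => [|z zs]; first by rewrite Ohm1R ?sG_s ?mem_head.
by rewrite sG_s ?inE ?zs ?orbT.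
Qed.

Lemma lcommVl w s : w \in 'Ohm_1(G) -> {subset s <= G} -> lcomm w^-1 s = (lcomm w s)^-1.
Proof.
elim: s w => [|c s IHs] w wO sG_s //=.
have cG : c \in G by rewrite sG_s ?mem_head.
rewrite Ohm1_commVl // IHs ?Ohm1R // => z zs.
by rewrite sG_s ?inE ?zs ?orbT.
Qed.

Lemma lcomm_swap_adj w u a b v : w \in 'Ohm_1(G) ->
  {subset u <= G} -> a \in G -> b \in G -> {subset v <= G} ->
  lcomm w (u ++ a :: b :: v) = (lcomm w (u ++ b :: a :: v))^-1.
Proof.
move=> wO uG aG bG vG; rewrite /lcomm !foldl_cat -/(lcomm w u) /= -!/(lcomm _ v).
have uO := lcomm_Ohm1 wO uG.
by rewrite Ohm1_comm_swap // lcommVl // !Ohm1R.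
Qed.

End Semi3Abelian.

Theorem lemma3p2 (gT : finGroupType) (G : {group gT}) (x : gT) (k : nat)
    (g : 'I_k -> gT) (sigma : 'S_k) :
  3.-group G -> semi3abelian G -> x \in 'Ohm_1(G) -> 0 < k ->
  (forall i, g i \in G) ->
  lcomm x [seq g (sigma i) | i <- enum 'I_k]
  = lcomm x [seq g i | i <- enum 'I_k] ^+ (2 ^ odd_perm sigma).
Proof.
move=> pG sG xO _ gG.
have gsG (s : seq 'I_k) : {subset map g s <= G} by move=> _ /mapP[i _ ->].
pose F s := lcomm x (map g s).
have F_swap_adj u a b v : F (u ++ a :: b :: v) = (F (u ++ b :: a :: v))^-1.
  by rewrite /F !map_cat /= (lcomm_swap_adj pG sG).
rewrite (map_comp g sigma).
change (F (map sigma (enum 'I_k)) = F (enum 'I_k) ^+ (2 ^ odd_perm sigma)).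
rewrite (alt_map_perm F_swap_adj _ (enum_uniq _)); last by move=> i; rewrite mem_enum.
case: odd_perm; rewrite ?expg1 // expn1; apply: mulg1_eq.
by rewrite -expgS (Ohm1_expg3 pG sG) // lcomm_Ohm1.
Qed.
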